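(* Let $G$ be a finite group with $Z(G)=1$, $H\subseteq G$ an abelian subgroup, $\omega$ a non-degenerate 2-cocycle on $\widehat H$, and $A=(kG)^J$ with $J=\sum_{\alpha,\beta\in\widehat H}\omega(\alpha,\beta)e_\alpha\otimes e_\beta$. Then $|H|$ divides $[A^*:G(A^* )\cap Z(A^* )]=\dim A/|G(A^* )\cap Z(A^* )|$.
   Context: $k$ is an algebraically closed field of characteristic zero. For a twist $J$ in a Hopf algebra $A$, $A^J$ is the Hopf algebra with the same algebra and counit, comultiplication $\Delta^J(h)=J^{-1}\Delta(h)J$ and antipode $S^J(h)=v^{-1}S(h)v$, $v=m(S\otimes\mathrm{id})(J)$. For an abelian subgroup $H$ of $G$, $\widehat H$ is its character group, $e_\chi=\frac{1}{|H|}\sum_{h\in H}\chi(h^{-1})h$ for $\chi\in\widehat H$, and for a 2-cocycle $\omega$ on $\widehat H$ the element $J=\sum\omega(\alpha,\beta)e_\alpha\otimes e_\beta$ is a twist in $kG$. $\chi\in\widehat H$ is $\omega$-regular if $\omega(\chi,\psi)=\omega(\psi,\chi)$ for all $\psi\in\widehat H$; $\omega$ is non-degenerate if only the trivial character is $\omega$-regular. $G(A^* )=\widehat G$ is the group of group-likes of $A^*$ and $Z(A^* )$ its center. *)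

From HB Require Import structures.
From mathcomp Require Import all_boot all_order all_algebra all_fingroup all_solvable.
Set Implicit Arguments. Unset Strict Implicit. Unset Printing Implicit Defensive.
Import GRing.Theory.
Local Open Scope ring_scope.

Section Defs.
Variables (k : fieldType) (gT : finGroupType).

(* The group algebra kG (G = the whole finite group gT): coefficient functions. *)
Local Notation grpalg := {ffun gT -> k}.
(* kG (x) kG, identified with k[G x G]: coefficient functions on pairs. *)
Local Notation tens := {ffun gT * gT -> k}.

Definition tpure (a b : grpalg) : tens := [ffun p => a p.1 * b p.2].
Definition tmul (a b : tens) : tens :=
  [ffun p : gT * gT => \sum_(u : gT * gT)
      a u * b ((u.1^-1 * p.1)%g, (u.2^-1 * p.2)%g)].
Definition tone : tens := [ffun p => ((p == (1%g, 1%g)) : nat)%:R].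
Definition Delta (h : gT) : tens := [ffun p => ((p == (h, h)) : nat)%:R].

(* linear characters of the subgroup H (values k^x), extended by 0 off H *)
Definition is_char (H : {set gT}) (f : grpalg) : bool :=
  [forall x, (x \notin H) ==> (f x == 0)] && (f 1%g == 1) &&
  [forall x in H, forall y in H, f (x * y)%g == f x * f y].
Definition char_one (H : {set gT}) : grpalg := [ffun x => ((x \in H) : nat)%:R].
Definition char_mul (a b : grpalg) : grpalg := [ffun x => a x * b x].

Definition echi (H : {set gT}) (chi : grpalg) : grpalg :=
  [ffun x => if x \in H then (#|H|%:R)^-1 * chi (x^-1)%g else 0].

(* 2-cocycle on \hat H, where X enumerates \hat H *)
Definition cocycle2 (X : seq grpalg) (w : grpalg -> grpalg -> k) : Prop :=
  (forall a b, a \in X -> b \in X -> w a b != 0) /\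
  (forall a b c, a \in X -> b \in X -> c \in X ->
     w a b * w (char_mul a b) c = w b c * w a (char_mul b c)).

Definition omega_regular (X : seq grpalg) (w : grpalg -> grpalg -> k) (chi : grpalg) :=
  forall psi, psi \in X -> w chi psi = w psi chi.

Definition nondeg_cocycle (H : {set gT}) (X : seq grpalg) (w : grpalg -> grpalg -> k) :=
  forall chi, chi \in X -> omega_regular X w chi -> chi = char_one H.

Definition twistJ (H : {set gT}) (X : seq grpalg) (w : grpalg -> grpalg -> k) : tens :=
  [ffun p => \sum_(a <- X) \sum_(b <- X) w a b * tpure (echi H a) (echi H b) p].

Definition DeltaJ (J Jinv : tens) (h : gT) : tens := tmul (tmul Jinv (Delta h)) J.

(* A^* = functionals on kG = coefficient functions on G; product dual to Delta^J *)
Definition dmul (J Jinv : tens) (f g : grpalg) : grpalg :=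
  [ffun h => \sum_(p : gT * gT) DeltaJ J Jinv h p * (f p.1 * g p.2)].

(* group-like elements of A^*: Delta_{A^*} f = f (x) f and eps(f) = f(1) = 1,
   i.e. algebra maps kG -> k *)
Definition grouplike_dual (f : grpalg) : Prop :=
  f 1%g = 1 /\ forall x y, f (x * y)%g = f x * f y.

Definition central_dual (J Jinv : tens) (f : grpalg) : Prop :=
  forall g, dmul J Jinv f g = dmul J Jinv g f.

End Defs.

(* An algebra map f : kG -> k is central in A^* = ((kG)^J)^* iff contracting
   Delta^J(h) against f from the left and from the right agree for all h.
   Contracting J against f gives sum_chi w(chi_f, chi) e_chi, chi_f the
   restriction of f to H, so centrality says that
   W = sum_chi (w(chi, chi_f) / w(chi_f, chi)) e_chi commutes with every h,
   i.e. W is a class function.  Since chi |-> w(chi, chi_f) / w(chi_f, chi) is a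
   character of H^, W is supported on the single point x of H at which every
   chi takes that value; conjugation invariance puts x in Z(G) = 1, so chi_f is
   omega-regular, hence trivial.  Conversely, if f is trivial on H then J
   contracts to a scalar and f is central.  So G(A^* ) /\ Z(A^* ) consists of the
   linear characters of G trivial on K = H G', there are [G : K] of them, and
   |G| / [G : K] = |K| is a multiple of |H|. *)

From HB Require Import structures.
From mathcomp Require Import all_boot all_order all_algebra all_fingroup all_solvable.
From mathcomp Require Import all_field all_character ring.
Import GRing.Theory.
Set Implicit Arguments. Unset Strict Implicit. Unset Printing Implicit Defensive.
Local Open Scope ring_scope.

Section GroupAlgebra.
Variables (k : fieldType) (gT : finGroupType).
Local Notation kG := {ffun gT -> k}.

Definition gmul (a b : kG) : kG := [ffun x => \sum_y a y * b (y^-1 * x)%g].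
Definition gdelta (x : gT) : kG := [ffun y => ((y == x) : nat)%:R].
Definition gscale (c : k) (a : kG) : kG := [ffun y => c * a y].

Lemma gmulE (a b : kG) x : gmul a b x = \sum_y a y * b (y^-1 * x)%g.
Proof. by rewrite ffunE. Qed.

Lemma gscaleE c (a : kG) y : gscale c a y = c * a y.
Proof. by rewrite ffunE. Qed.

Lemma sum_mul_gdelta (a : kG) t : \sum_y a y * gdelta t y = a t.
Proof.
rewrite (bigD1 t) //= big1 ?addr0; first by rewrite ffunE eqxx mulr1.
by move=> y /negbTE ny; rewrite ffunE ny mulr0.
Qed.

Lemma gmulA (a b c : kG) : gmul (gmul a b) c = gmul a (gmul b c).
Proof.
apply/ffunP=> x; rewrite !ffunE.
under eq_bigr do rewrite ffunE big_distrl /=.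
rewrite exchange_big /=; apply: eq_bigr => z _.
rewrite gmulE big_distrr /= (reindex_inj (mulgI z)) /=; apply: eq_bigr => t _.
by rewrite mulKg mulrA invMg mulgA.
Qed.

Lemma gmul_deltal (x : gT) (a : kG) : gmul (gdelta x) a = [ffun y => a (x^-1 * y)%g].
Proof.
apply/ffunP=> y; rewrite !ffunE (bigD1 x) //= big1 ?addr0; first by rewrite ffunE eqxx mul1r.
by move=> z /negbTE nz; rewrite ffunE nz mul0r.
Qed.

Lemma gmul_deltar (x : gT) (a : kG) : gmul a (gdelta x) = [ffun y => a (y * x^-1)%g].
Proof.
apply/ffunP=> y; rewrite !ffunE (bigD1 (y * x^-1)%g) //= big1 ?addr0.
  by rewrite ffunE invMg invgK mulgKV eqxx mulr1.
move=> z nz; rewrite ffunE; case: eqP => [zy|]; last by rewrite mulr0.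
by rewrite -zy invMg invgK mulKVg eqxx in nz.
Qed.

Lemma gmul1l (a : kG) : gmul (gdelta 1) a = a.
Proof. by apply/ffunP=> y; rewrite gmul_deltal ffunE invg1 mul1g. Qed.

Lemma gmul1r (a : kG) : gmul a (gdelta 1) = a.
Proof. by apply/ffunP=> y; rewrite gmul_deltar ffunE invg1 mulg1. Qed.

Lemma gmulZl c (a b : kG) : gmul (gscale c a) b = gscale c (gmul a b).
Proof.
apply/ffunP=> x; rewrite !ffunE big_distrr /=; apply: eq_bigr=> y _.
by rewrite ffunE mulrA.
Qed.

Lemma gmulZr c (a b : kG) : gmul a (gscale c b) = gscale c (gmul a b).
Proof.
apply/ffunP=> x; rewrite !ffunE big_distrr /=; apply: eq_bigr=> y _.
by rewrite ffunE mulrCA.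
Qed.

Lemma gmul_inv_uniq (u u' v : kG) :
  gmul u' u = gdelta 1 -> gmul u v = gdelta 1 -> u' = v.
Proof. by move=> u'u uv; rewrite -[u']gmul1r -uv -gmulA u'u gmul1l. Qed.

Lemma gmul_conj_scalar (u u' : kG) c h : c != 0 -> u = gscale c (gdelta 1) ->
  gmul u' u = gdelta 1 -> gmul (gmul u' (gdelta h)) u = gdelta h.
Proof.
move=> c0 -> u'u.
have -> : u' = gscale c^-1 (gdelta 1).
  apply/ffunP=> y; move: u'u; rewrite gmulZr gmul1r => <-.
  by rewrite !gscaleE mulrA mulVf ?mul1r.
rewrite gmulZl gmul1l gmulZr gmulZl gmul1r.
by apply/ffunP=> y; rewrite !gscaleE mulrA mulfV ?mul1r.
Qed.

Lemma gmul_unit_neq0 (u v : kG) : gmul u v = gdelta 1 -> exists x, u x != 0.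
Proof.
move=> uv; case: (pickP (fun x => u x != 0)) => [x ux|u0]; first by exists x.
have := congr1 (fun t : kG => t 1%g) uv; rewrite gmulE ffunE eqxx big1 => [/eqP|y _].
  by rewrite eq_sym oner_eq0.
by move/negbFE/eqP: (u0 y) => ->; rewrite mul0r.
Qed.

Lemma gmul_delta_comm_conj (W : kG) :
  (forall h, gmul W (gdelta h) = gmul (gdelta h) W) ->
  forall h x, W (h * x * h^-1)%g = W x.
Proof.
move=> Wc h x; have := congr1 (fun t : kG => t (h * x)%g) (Wc h).
by rewrite gmul_deltar gmul_deltal /= !ffunE mulKg.
Qed.

End GroupAlgebra.

Section Tensors.
Variables (k : fieldType) (gT : finGroupType).
Local Notation kG := {ffun gT -> k}.
Local Notation tens := {ffun gT * gT -> k}.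

Definition lcontr (f : kG) (t : tens) : kG := [ffun y => \sum_x t (x, y) * f x].
Definition tswap (t : tens) : tens := [ffun p => t (p.2, p.1)].

Lemma lcontrE (f : kG) (t : tens) y : lcontr f t y = \sum_x t (x, y) * f x.
Proof. by rewrite ffunE. Qed.

Lemma tswapE (t : tens) x y : tswap t (x, y) = t (y, x).
Proof. by rewrite ffunE. Qed.

Lemma sum_pair (I J : finType) (F : I * J -> k) : \sum_u F u = \sum_a \sum_b F (a, b).
Proof. by rewrite pair_bigA; apply: eq_bigr; case. Qed.

Lemma lcontr_tmul (f : kG) (s t : tens) : {morph f : x y / (x * y)%g >-> x * y} ->
  lcontr f (tmul s t) = gmul (lcontr f s) (lcontr f t).
Proof.
move=> fM; apply/ffunP=> y; rewrite /gmul /lcontr !ffunE.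
under eq_bigr do rewrite ffunE big_distrl /=.
rewrite exchange_big sum_pair exchange_big /=; apply: eq_bigr => b _.
rewrite ffunE big_distrl /=; apply: eq_bigr => a _.
rewrite ffunE big_distrr /= (reindex_inj (mulgI a)) /=; apply: eq_bigr => x _.
by rewrite mulKg fM -!mulrA; congr (_ * _); rewrite mulrCA.
Qed.

Lemma lcontr_tone (f : kG) : f 1%g = 1 -> lcontr f (tone k gT) = gdelta k 1%g.
Proof.
move=> f1; apply/ffunP=> y; rewrite !ffunE (bigD1 1%g) //= big1 ?addr0.
  by rewrite ffunE f1 mulr1 xpair_eqE eqxx.
by move=> x /negbTE nx; rewrite ffunE xpair_eqE nx mul0r.
Qed.

Lemma lcontr_Delta (f : kG) h : lcontr f (Delta k h) = gscale (f h) (gdelta k h).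
Proof.
apply/ffunP=> y; rewrite !ffunE (bigD1 h) //= big1 ?addr0.
  by rewrite ffunE xpair_eqE eqxx /= mulrC.
by move=> x /negbTE nx; rewrite ffunE xpair_eqE nx mul0r.
Qed.

Lemma lcontr_DeltaJ (f : kG) J Jinv h : {morph f : x y / (x * y)%g >-> x * y} ->
  lcontr f (DeltaJ J Jinv h) =
  gscale (f h) (gmul (gmul (lcontr f Jinv) (gdelta k h)) (lcontr f J)).
Proof. by move=> fM; rewrite /DeltaJ !lcontr_tmul // lcontr_Delta gmulZr gmulZl. Qed.

Lemma tswap_tmul s t : tswap (tmul s t) = tmul (tswap s) (tswap t).
Proof.
apply/ffunP=> p; rewrite !ffunE.
have swap_inj : injective (fun u : gT * gT => (u.2, u.1)) by move=> [? ?] [? ?] [-> ->].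
by rewrite (reindex_inj swap_inj) /=; apply: eq_bigr => u _; rewrite !ffunE.
Qed.

Lemma tswap_Delta h : tswap (Delta k h) = Delta k h.
Proof. by apply/ffunP=> -[x y]; rewrite !ffunE !xpair_eqE andbC. Qed.

Lemma tswap_tone : tswap (tone k gT) = tone k gT.
Proof. by apply/ffunP=> -[x y]; rewrite !ffunE !xpair_eqE andbC. Qed.

Lemma tswap_DeltaJ J Jinv h : tswap (DeltaJ J Jinv h) = DeltaJ (tswap J) (tswap Jinv) h.
Proof. by rewrite /DeltaJ !tswap_tmul tswap_Delta. Qed.

Lemma dmul_lcontr J Jinv (f g : kG) h :
  dmul J Jinv f g h = \sum_y lcontr f (DeltaJ J Jinv h) y * g y.
Proof.
rewrite ffunE sum_pair exchange_big /=; apply: eq_bigr => b _.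
rewrite lcontrE big_distrl /=; apply: eq_bigr => a _.
by rewrite mulrA.
Qed.

Lemma dmul_lcontr_swap J Jinv (f g : kG) h :
  dmul J Jinv g f h = \sum_y lcontr f (tswap (DeltaJ J Jinv h)) y * g y.
Proof.
rewrite ffunE sum_pair; apply: eq_bigr => a _.
rewrite lcontrE big_distrl /=; apply: eq_bigr => b _.
by rewrite tswapE /= [g a * _]mulrC mulrA.
Qed.

Lemma central_dualP J Jinv (f : kG) :
  central_dual J Jinv f <->
  (forall h, lcontr f (DeltaJ J Jinv h) = lcontr f (DeltaJ (tswap J) (tswap Jinv) h)).
Proof.
split=> [C h | E g]; last first.
  by apply/ffunP=> h; rewrite dmul_lcontr dmul_lcontr_swap E tswap_DeltaJ.
apply/ffunP=> t; have /ffunP/(_ h) := C (gdelta k t).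
by rewrite dmul_lcontr dmul_lcontr_swap !sum_mul_gdelta tswap_DeltaJ.
Qed.

End Tensors.

Lemma eq0_of_eq_mul (R : idomainType) (c s : R) : s = c * s -> c != 1 -> s = 0.
Proof.
move=> s_cs c1; apply/eqP; move/eqP: s_cs.
by rewrite -subr_eq0 -{1}[s]mul1r -mulrBl mulf_eq0 subr_eq0 eq_sym (negbTE c1).
Qed.

Section Characters.
Variables (k : fieldType) (gT : finGroupType) (H : {group gT}).
Local Notation kG := {ffun gT -> k}.

Lemma grouplike_neq0 (f : kG) x : grouplike_dual f -> f x != 0.
Proof.
case=> f1 fM; apply/eqP=> fx0; have := fM x x^-1%g.
by rewrite mulgV f1 fx0 mul0r => /eqP; rewrite oner_eq0.
Qed.

Section OneChar.
Variable a : kG.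
Hypothesis Ha : is_char H a.

Lemma char_out x : x \notin H -> a x = 0.
Proof. by case/andP: Ha => /andP[/forallP P _] _ xH; apply/eqP; exact: implyP (P x) xH. Qed.

Lemma char1 : a 1%g = 1.
Proof. by case/andP: Ha => /andP[_ /eqP]. Qed.

Lemma charM x y : x \in H -> y \in H -> a (x * y)%g = a x * a y.
Proof. by case/andP: Ha => _ /forall_inP P xH yH; apply/eqP; exact: forall_inP (P x xH) y yH. Qed.

Lemma charV x : x \in H -> a x^-1%g * a x = 1.
Proof. by move=> xH; rewrite -charM ?groupV // mulVg char1. Qed.

Lemma char_neq0 x : x \in H -> a x != 0.
Proof. by move=> /charV aVa; apply: contra_eq_neq aVa => ->; rewrite mulr0 eq_sym oner_neq0. Qed.

End OneChar.

Lemma sum_hom_nontrivial (mu : gT -> k) y :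
  {in H &, {morph mu : x z / (x * z)%g >-> x * z}} ->
  y \in H -> mu y != 1 -> \sum_(x in H) mu x = 0.
Proof.
move=> muM yH muy; apply: eq0_of_eq_mul muy.
rewrite {1}(reindex_inj (mulgI y)) /= big_distrr /=.
apply: eq_big => [x|x xH]; first by rewrite groupMl.
by rewrite muM // -(groupMl x yH).
Qed.

Lemma char_orthogonality (a c : kG) : is_char H a -> is_char H c ->
  \sum_(x in H) a x^-1%g * c x = if a == c then (#|H|%:R : k) else 0.
Proof.
move=> Ha Hc; case: eqP => [<-|ne].
  by rewrite (eq_bigr (fun _ => 1)) ?sumr_const // => x /(charV Ha).
have [y /andP[yH ay] | ac] := pickP [pred y | (y \in H) && (a y != c y)]; last first.
  case: ne; apply/ffunP=> x; have [xH|xH] := boolP (x \in H); last by rewrite !char_out.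
  by have := ac x; rewrite /= xH => /negbFE/eqP.
apply: (sum_hom_nontrivial (mu := fun x => a x^-1%g * c x) _ yH).
  move=> x z xH zH /=; rewrite invMg (charM Ha) ?groupV // (charM Hc) //.
  by rewrite [a z^-1%g * _]mulrC mulrACA.
apply: contra ay => /eqP E; apply/eqP.
by rewrite -[a y]mulr1 -E mulrA [a y * _]mulrC (charV Ha yH) mul1r.
Qed.

Definition restrH (f : kG) : kG := [ffun x => if x \in H then f x else 0].

Lemma is_char_restrH (f : kG) : grouplike_dual f -> is_char H (restrH f).
Proof.
case=> f1 fM; apply/andP; split; [apply/andP; split|].
- by apply/forallP=> x; apply/implyP=> xH; rewrite ffunE (negbTE xH).
- by rewrite ffunE group1 f1.
- apply/forall_inP=> x xH; apply/forall_inP=> y yH.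
  by rewrite !ffunE groupM // xH yH fM.
Qed.

Hypothesis k_pchar0 : [pchar k] =i pred0.

Lemma cardH_neq0 : (#|H|%:R : k) != 0.
Proof. by rewrite (proj1 (pcharf0P k) k_pchar0) -lt0n cardG_gt0. Qed.

Lemma sum_echi_mul_hom (a f : kG) : is_char H a -> grouplike_dual f ->
  \sum_x echi H a x * f x = ((a == restrH f) : nat)%:R.
Proof.
move=> Ha fG.
transitivity (\sum_(x in H) (#|H|%:R : k)^-1 * (a x^-1%g * restrH f x)).
  rewrite [RHS]big_mkcond /=; apply: eq_bigr => x _; rewrite !ffunE.
  by case: ifP => xH; [rewrite mulrA | rewrite mul0r].
rewrite -big_distrr /= (char_orthogonality Ha (is_char_restrH fG)).
by case: eqP => _ /=; [rewrite mulVf ?cardH_neq0 | rewrite mulr0].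
Qed.

Lemma gmul_echi (a b : kG) : is_char H a -> is_char H b ->
  gmul (echi H a) (echi H b) = gscale ((a == b) : nat)%:R (echi H a).
Proof.
move=> Ha Hb; apply/ffunP=> x; rewrite !ffunE.
have [xH|xH] := boolP (x \in H); last first.
  rewrite mulr0 big1 // => y _; rewrite !ffunE.
  case: ifP => yH; last by rewrite mul0r.
  by rewrite groupMl ?groupV // (negbTE xH) mulr0.
transitivity (\sum_(y in H)
    ((#|H|%:R : k)^-1 * (#|H|%:R)^-1 * b x^-1%g) * (a y^-1%g * b y)).
  rewrite [RHS]big_mkcond; apply: eq_bigr => y _; rewrite !ffunE.
  case: ifP => yH; last by rewrite mul0r.
  by rewrite groupMl ?groupV // xH invMg invgK (charM Hb) ?groupV //; ring.
rewrite -big_distrr /= (char_orthogonality Ha Hb).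
case: eqP => [->|_]; last by rewrite !mulr0 mul0r.
by have := cardH_neq0; rewrite /= mul1r => nz; field.
Qed.

End Characters.

Section EchiCombinations.
Variables (k : fieldType) (gT : finGroupType) (H : {group gT}).
Hypothesis k_pchar0 : [pchar k] =i pred0.
Local Notation kG := {ffun gT -> k}.
Local Notation one := (char_one k H).
Variable X : seq kG.
Hypothesis X_uniq : uniq X.
Hypothesis memX : forall f, (f \in X) = is_char H f.

Lemma is_char_one : is_char H one.
Proof.
apply/andP; split; [apply/andP; split|].
- by apply/forallP=> x; apply/implyP=> xH; rewrite ffunE (negbTE xH).
- by rewrite ffunE group1.
- apply/forall_inP=> x xH; apply/forall_inP=> y yH.
  by rewrite !ffunE groupM // xH yH mulr1.
Qed.

Lemma char_one_in : one \in X.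
Proof. by rewrite memX is_char_one. Qed.

Lemma char_mulC (a b : kG) : char_mul a b = char_mul b a.
Proof. by apply/ffunP=> x; rewrite !ffunE mulrC. Qed.

Lemma char_mul_in a b : a \in X -> b \in X -> char_mul a b \in X.
Proof.
rewrite !memX => Ha Hb; apply/andP; split; [apply/andP; split|].
- by apply/forallP=> x; apply/implyP=> xH; rewrite ffunE (char_out Ha xH) mul0r.
- by rewrite ffunE (char1 Ha) (char1 Hb) mulr1.
- apply/forall_inP=> x xH; apply/forall_inP=> y yH.
  by rewrite !ffunE (charM Ha) // (charM Hb) //; apply/eqP; ring.
Qed.

Lemma char_mul1l a : a \in X -> char_mul one a = a.
Proof.
rewrite memX => Ha; apply/ffunP=> x; rewrite !ffunE.
by have [xH|xH] := boolP (x \in H); rewrite /= ?mul1r // mul0r (char_out Ha).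
Qed.

Lemma char_mul_perm b : b \in X -> perm_eq (map (char_mul b) X) X.
Proof.
rewrite memX => Hb.
have inj : {in X &, injective (char_mul b)}.
  move=> a a'; rewrite !memX => Ha Ha' /ffunP ab; apply/ffunP=> y; have := ab y.
  rewrite !ffunE; have [yH|yH] := boolP (y \in H); first exact/mulfI/(char_neq0 Hb).
  by rewrite (char_out Ha yH) (char_out Ha' yH).
have U : uniq (map (char_mul b) X) by rewrite map_inj_in_uniq.
apply: uniq_perm => //.
apply: (uniq_min_size U _ _).2; last by rewrite size_map.
by move=> c /mapP[a aX ->]; rewrite char_mul_in // memX.
Qed.

Lemma sum_X_hom_nontrivial (mu : kG -> k) b :
  {in X &, {morph mu : a c / char_mul a c >-> a * c}} ->
  b \in X -> mu b != 1 -> \sum_(a <- X) mu a = 0.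
Proof.
move=> muM bX mub; apply: eq0_of_eq_mul mub.
rewrite -{1}(perm_big X (char_mul_perm bX)) big_map big_distrr /=.
by apply: eq_big_seq => a aX; exact: muM.
Qed.

Definition echi_comb (c : kG -> k) : kG := [ffun y => \sum_(b <- X) c b * echi H b y].

Lemma echi_combE c y : echi_comb c y = \sum_(b <- X) c b * echi H b y.
Proof. by rewrite ffunE. Qed.

Lemma eq_echi_comb c d : {in X, c =1 d} -> echi_comb c = echi_comb d.
Proof.
by move=> E; apply/ffunP=> y; rewrite !echi_combE; apply: eq_big_seq => b bX; rewrite E.
Qed.

Lemma echi_combZ c d : echi_comb (fun b => c * d b) = gscale c (echi_comb d).
Proof.
apply/ffunP=> y; rewrite gscaleE !echi_combE big_distrr /=.
by apply: eq_bigr => b _; rewrite mulrA.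
Qed.

Lemma gmul_echi_comb c d : gmul (echi_comb c) (echi_comb d) = echi_comb (fun b => c b * d b).
Proof.
apply/ffunP=> x; rewrite gmulE [RHS]echi_combE.
transitivity (\sum_(a <- X) \sum_(b <- X) c a * d b * gmul (echi H a) (echi H b) x).
  under eq_bigr do rewrite !echi_combE big_distrl /=.
  rewrite exchange_big /=; apply: eq_bigr => a _.
  under eq_bigr do rewrite big_distrr /=.
  rewrite exchange_big /=; apply: eq_bigr => b _.
  by rewrite gmulE big_distrr /=; apply: eq_bigr => y _; ring.
apply: eq_big_seq => a aX; rewrite (bigD1_seq a) //= big1_seq ?addr0.
  by rewrite gmul_echi -?memX // ffunE eqxx mul1r.
move=> b /andP[ba bX]; rewrite gmul_echi -?memX // ffunE eq_sym (negbTE ba).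
by rewrite mul0r mulr0.
Qed.

Lemma lcontr_twistJ (f : kG) (w : kG -> kG -> k) : grouplike_dual f ->
  lcontr f (twistJ H X w) = echi_comb (w (restrH H f)).
Proof.
move=> fG; have rX : restrH H f \in X by rewrite memX is_char_restrH.
apply/ffunP=> y; rewrite lcontrE echi_combE.
transitivity (\sum_(a <- X) (\sum_x echi H a x * f x) * \sum_(b <- X) w a b * echi H b y).
  under eq_bigr do rewrite ffunE big_distrl /=.
  rewrite exchange_big /=; apply: eq_bigr => a _.
  rewrite big_distrl /=; apply: eq_bigr => x _.
  rewrite big_distrl big_distrr /=; apply: eq_bigr => b _.
  by rewrite ffunE; ring.
rewrite (bigD1_seq (restrH H f) rX X_uniq) /= sum_echi_mul_hom -?memX // eqxx mul1r.
rewrite [X in _ + X]big1_seq ?addr0 // => a /andP[ba aX].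
by rewrite sum_echi_mul_hom -?memX // (negbTE ba) mul0r.
Qed.

Lemma tswap_twistJ (w : kG -> kG -> k) :
  tswap (twistJ H X w) = twistJ H X (fun a b => w b a).
Proof.
apply/ffunP=> -[x y]; rewrite tswapE !ffunE exchange_big /=.
by apply: eq_bigr => a _; apply: eq_bigr => b _; rewrite !ffunE /=; ring.
Qed.

End EchiCombinations.

Section TwistedCentre.
Variables (k : fieldType) (gT : finGroupType) (H : {group gT}).
Hypothesis k_pchar0 : [pchar k] =i pred0.
Local Notation kG := {ffun gT -> k}.
Local Notation one := (char_one k H).
Variable X : seq kG.
Hypothesis X_uniq : uniq X.
Hypothesis memX : forall f, (f \in X) = is_char H f.
Local Notation echi_comb := (echi_comb H X).
Local Notation char_one_in := (char_one_in memX).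

Variable w : kG -> kG -> k.
Hypothesis w_cocycle2 : cocycle2 X w.

Lemma w_neq0 a b : a \in X -> b \in X -> w a b != 0.
Proof. by case: w_cocycle2 => P _; apply: P. Qed.

Lemma w_cocycle a b c : a \in X -> b \in X -> c \in X ->
  w a b * w (char_mul a b) c = w b c * w a (char_mul b c).
Proof. by case: w_cocycle2 => _ P; apply: P. Qed.

Lemma w_onel b : b \in X -> w one b = w one one.
Proof.
move=> bX; have := w_cocycle char_one_in char_one_in bX.
by rewrite !(char_mul1l memX) ?char_one_in // => /(mulIf (w_neq0 char_one_in bX)).
Qed.

Lemma w_oner b : b \in X -> w b one = w one one.
Proof.
move=> bX; have := w_cocycle bX char_one_in char_one_in.
rewrite char_mulC !(char_mul1l memX) ?char_one_in //.
by move=> /(mulIf (w_neq0 bX char_one_in)).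
Qed.

Definition walt (chi b : kG) := w b chi / w chi b.

Lemma walt_neq0 chi b : chi \in X -> b \in X -> walt chi b != 0.
Proof. by move=> cX bX; rewrite mulf_neq0 ?invr_eq0 ?w_neq0. Qed.

Lemma walt_mul chi a b : chi \in X -> a \in X -> b \in X ->
  walt chi (char_mul a b) = walt chi a * walt chi b.
Proof.
move=> cX aX bX; rewrite /walt.
have abX := char_mul_in memX aX bX; have caX := char_mul_in memX cX aX.
have e1 := w_cocycle aX bX cX; have e2 := w_cocycle cX aX bX.
have e3 := w_cocycle aX cX bX.
rewrite [char_mul a chi]char_mulC in e3; rewrite [char_mul b chi]char_mulC in e1.
have E1 : w (char_mul a b) chi = w b chi * w a (char_mul chi b) / w a b.
  by rewrite -e1; field; rewrite w_neq0.
have E2 : w chi (char_mul a b) = w chi a * w (char_mul chi a) b / w a b.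
  by rewrite e2; field; rewrite w_neq0.
have E3 : w a (char_mul chi b) = w a chi * w (char_mul chi a) b / w chi b.
  by rewrite e3; field; rewrite w_neq0.
by rewrite E1 E2 E3; field; rewrite !w_neq0.
Qed.

Lemma omega_regular_walt chi : chi \in X ->
  {in X, forall b, walt chi b = 1} -> omega_regular X w chi.
Proof.
by move=> cX walt1 b bX; apply/esym/divr1_eq/walt1.
Qed.

Lemma echi_comb_supp c x : echi_comb c x != 0 -> x \in H.
Proof.
apply: contraR => xH; rewrite echi_combE big1_seq // => b _.
by rewrite ffunE (negbTE xH) mulr0.
Qed.

Lemma restrH_trivial (f : kG) : {in H, forall x, f x = 1} -> restrH H f = one.
Proof.
move=> f1; apply/ffunP=> x; rewrite !ffunE.
by case: ifP => xH; rewrite ?f1.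
Qed.

Variable Jinv : {ffun gT * gT -> k}.
Local Notation J := (twistJ H X w).
Hypothesis J_linv : tmul Jinv J = tone k gT.

Lemma lcontr_Jinv_mul (f : kG) : grouplike_dual f ->
  gmul (lcontr f Jinv) (lcontr f J) = gdelta k 1.
Proof. by case=> f1 fM; rewrite -lcontr_tmul // J_linv lcontr_tone. Qed.

Lemma lcontr_tswap_Jinv_mul (f : kG) : grouplike_dual f ->
  gmul (lcontr f (tswap Jinv)) (lcontr f (tswap J)) = gdelta k 1.
Proof. by case=> f1 fM; rewrite -lcontr_tmul // -tswap_tmul J_linv tswap_tone lcontr_tone. Qed.

Lemma lcontr_twistJ_trivial (f : kG) : grouplike_dual f -> {in H, forall x, f x = 1} ->
  lcontr f J = gscale (w one one) (echi_comb (fun _ => 1)).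
Proof.
move=> fG f1; rewrite lcontr_twistJ // restrH_trivial // -echi_combZ.
by apply: eq_echi_comb => b bX; rewrite w_onel // mulr1.
Qed.

Lemma lcontr_tswap_twistJ_trivial (f : kG) : grouplike_dual f -> {in H, forall x, f x = 1} ->
  lcontr f (tswap J) = gscale (w one one) (echi_comb (fun _ => 1)).
Proof.
move=> fG f1; rewrite tswap_twistJ lcontr_twistJ // restrH_trivial // -echi_combZ.
by apply: eq_echi_comb => b bX; rewrite w_oner // mulr1.
Qed.

(* [sum_chi e_chi = 1] would follow from [#|X| = #|H|]; here it comes from the
   invertibility of [J] instead, [sum_chi e_chi] being an invertible idempotent. *)
Lemma echi_comb1 : echi_comb (fun _ => 1) = gdelta k 1.
Proof.
set E := echi_comb _; pose f1 : kG := [ffun _ => 1].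
have f1G : grouplike_dual f1 by split=> [|x y]; rewrite !ffunE ?mulr1.
have f1H : {in H, forall x, f1 x = 1} by move=> x _; rewrite ffunE.
have EE : gmul E E = E.
  by rewrite gmul_echi_comb //; apply: eq_echi_comb => b _; rewrite mulr1.
have := lcontr_Jinv_mul f1G; rewrite lcontr_twistJ_trivial // -/E => inv.
by rewrite -[E]gmul1l -inv gmulA gmulZl EE.
Qed.

Lemma gmul_echi_comb_inv c : {in X, forall b, c b != 0} ->
  gmul (echi_comb c) (echi_comb (fun b => (c b)^-1)) = gdelta k 1 /\
  gmul (echi_comb (fun b => (c b)^-1)) (echi_comb c) = gdelta k 1.
Proof.
move=> c0; rewrite !gmul_echi_comb // -echi_comb1.
by split; apply: eq_echi_comb => b bX; rewrite ?mulfV ?mulVf ?c0.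
Qed.

Lemma chars_separate x : x \in H -> {in X, forall b : kG, b x = 1} -> x = 1%g.
Proof.
move=> xH b1; have := congr1 (fun t : kG => t x^-1%g) echi_comb1.
rewrite echi_combE ffunE (eq_big_seq (fun _ => (#|H|%:R : k)^-1)); last first.
  by move=> b bX; rewrite ffunE groupV xH invgK b1 // mulr1 mul1r.
rewrite big_const_seq count_predT iter_addr_0.
case: eqP => [/eqP|_]; first by rewrite eq_invg1 => /eqP.
move/eqP; rewrite /= mulr0n -[_ *+ size X]mulr_natr mulf_eq0 invr_eq0.
rewrite (negbTE (cardH_neq0 H k_pchar0)) /=.
rewrite (proj1 (pcharf0P k) k_pchar0) size_eq0 => /eqP X0.
by have := char_one_in; rewrite X0.
Qed.

Lemma central_dual_trivial_on_H (f : kG) : grouplike_dual f ->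
  {in H, forall x, f x = 1} -> central_dual J Jinv f.
Proof.
move=> fG fH; apply/central_dualP => h.
have [_ fM] := fG; rewrite !lcontr_DeltaJ //; congr (gscale _ _).
have w11 := w_neq0 char_one_in char_one_in.
rewrite (gmul_conj_scalar h w11 _ (lcontr_Jinv_mul fG)); last first.
  by rewrite lcontr_twistJ_trivial // echi_comb1.
rewrite (gmul_conj_scalar h w11 _ (lcontr_tswap_Jinv_mul fG)) //.
by rewrite lcontr_tswap_twistJ_trivial // echi_comb1.
Qed.

Lemma walt_comb_commute (f : kG) : grouplike_dual f -> central_dual J Jinv f ->
  forall h, gmul (echi_comb (walt (restrH H f))) (gdelta k h)
          = gmul (gdelta k h) (echi_comb (walt (restrH H f))).
Proof.
move=> fG /central_dualP C h; have [_ fM] := fG.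
have chiX : restrH H f \in X by rewrite memX is_char_restrH.
set chi := restrH H f in chiX *.
pose u := echi_comb (w chi); pose ub := echi_comb (fun b => (w chi b)^-1).
pose v := echi_comb (fun b => w b chi); pose vb := echi_comb (fun b => (w b chi)^-1).
have uub : gmul u ub = gdelta k 1.
  by apply: (gmul_echi_comb_inv _).1 => b bX; rewrite w_neq0.
have vvb : gmul v vb = gdelta k 1.
  by apply: (gmul_echi_comb_inv _).1 => b bX; rewrite w_neq0.
have uE : lcontr f J = u by rewrite lcontr_twistJ.
have vE : lcontr f (tswap J) = v by rewrite tswap_twistJ lcontr_twistJ.
have ubE : lcontr f Jinv = ub by apply: gmul_inv_uniq (lcontr_Jinv_mul fG) _; rewrite uE.
have vbE : lcontr f (tswap Jinv) = vb.
  by apply: gmul_inv_uniq (lcontr_tswap_Jinv_mul fG) _; rewrite vE.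
have conj_eq : gmul (gmul ub (gdelta k h)) u = gmul (gmul vb (gdelta k h)) v.
  have /ffunP E := C h; rewrite !lcontr_DeltaJ // uE vE ubE vbE in E.
  by apply/ffunP => y; have := E y; rewrite !gscaleE; exact/mulfI/grouplike_neq0.
have -> : echi_comb (walt chi) = gmul v ub by rewrite gmul_echi_comb.
(* [v ub h = v (ub h u) ub = v (vb h v) ub = h v ub] *)
transitivity (gmul v (gmul (gmul (gmul ub (gdelta k h)) u) ub)).
  by rewrite !gmulA uub gmul1r.
by rewrite conj_eq !gmulA -[gmul v (gmul vb _)]gmulA vvb gmul1l.
Qed.

Lemma walt_comb_eval chi x : chi \in X -> echi_comb (walt chi) x != 0 ->
  {in X, forall b, walt chi b = b x}.
Proof.
move=> chiX Wx; have xH := echi_comb_supp Wx.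
pose mu b := walt chi b * b x^-1%g.
suff mu1 : {in X, forall b, walt chi b * b x^-1%g = 1}.
  move=> b bX; have Hb : is_char H b by rewrite -memX.
  by rewrite -[walt chi b]mulr1 -(charV Hb xH) mulrA mu1 ?mul1r.
move=> b bX; apply/eqP; apply: contraR Wx => mub.
have muM : {in X &, {morph mu : a c / char_mul a c >-> a * c}}.
  by move=> a c aX cX; rewrite /mu walt_mul // ffunE; ring.
rewrite echi_combE (eq_big_seq (fun b => (#|H|%:R)^-1 * mu b)) => [|a aX]; last first.
  by rewrite ffunE xH /mu; ring.
by rewrite -big_distrr /= (sum_X_hom_nontrivial X_uniq memX muM bX mub) mulr0.
Qed.

Lemma walt_comb_supp_uniq chi x y : chi \in X ->
  echi_comb (walt chi) x != 0 -> echi_comb (walt chi) y != 0 -> x = y.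
Proof.
move=> chiX Wx Wy; have xH := echi_comb_supp Wx; have yH := echi_comb_supp Wy.
apply/eqP; rewrite eq_mulgV1; apply/eqP/chars_separate; first by rewrite groupM ?groupV.
move=> b bX; have Hb : is_char H b by rewrite -memX.
rewrite (charM Hb) ?groupV // -(walt_comb_eval chiX Wx bX) (walt_comb_eval chiX Wy bX).
by rewrite mulrC (charV Hb yH).
Qed.

Lemma trivial_on_H_of_central (f : kG) :
  ('Z([set: gT]) = 1)%g -> nondeg_cocycle H X w ->
  grouplike_dual f -> central_dual J Jinv f -> {in H, forall x, f x = 1}.
Proof.
move=> Z1 nondeg fG C.
have chiX : restrH H f \in X by rewrite memX is_char_restrH.
set chi := restrH H f in chiX *; set W := echi_comb (walt chi).
have [x0 Wx0] : exists x0, W x0 != 0.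
  by apply: gmul_unit_neq0 (gmul_echi_comb_inv _).1 => b; exact: walt_neq0.
have x0Z : x0 \in ('Z([set: gT]))%g.
  apply/centerP; split=> [|h _]; first exact: in_setT.
  have Wconj := gmul_delta_comm_conj (walt_comb_commute fG C) h x0.
  have E := walt_comb_supp_uniq chiX Wx0 (_ : W (h * x0 * h^-1)%g != 0).
  by rewrite /commute {1}E ?mulgKV // -/W Wconj.
have chi1 : chi = one.
  apply: (nondeg _ chiX (omega_regular_walt chiX _)) => b bX.
  move: x0Z; rewrite Z1 => /set1P x01.
  by rewrite (walt_comb_eval chiX Wx0 bX) x01 (@char1 _ _ H) -?memX.
move=> x xH; have := congr1 (fun t : kG => t x) chi1.
by rewrite /chi !ffunE xH /= mulr1n.
Qed.

End TwistedCentre.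

Section HomsUpperBound.
Variables (k : fieldType) (gT : finGroupType) (K : {group gT}).
Hypothesis k_pchar0 : [pchar k] =i pred0.
Local Notation kG := {ffun gT -> k}.

Lemma hom_orthogonality (f g : kG) : grouplike_dual f -> grouplike_dual g ->
  \sum_x f x * (g x)^-1 = if f == g then (#|gT|%:R : k) else 0.
Proof.
move=> fG gG; case: eqP => [<-|ne].
  by rewrite (eq_bigr (fun _ => 1)) ?sumr_const // => x _; rewrite mulfV ?grouplike_neq0.
have [y /= fy | fg] := pickP [pred y | f y != g y]; last first.
  by case: ne; apply/ffunP=> x; have := fg x; rewrite /= => /negbFE/eqP.
have [[_ fM] [_ gM]] := (fG, gG).
rewrite (eq_bigl (fun x => x \in [set: gT])) => [|x]; last by rewrite inE.
apply: (@sum_hom_nontrivial _ _ [set: gT]%G _ y).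
- by move=> x z _ _; rewrite fM gM invfM mulrACA.
- by rewrite inE.
apply: contra fy => /eqP fgy; apply/eqP.
by rewrite -[g y]mulr1 -fgy mulrCA mulfV ?mulr1 ?grouplike_neq0.
Qed.

Variable L : seq kG.
Hypothesis L_uniq : uniq L.
Hypothesis L_hom : {in L, forall f, grouplike_dual f}.
Hypothesis L_trivK : {in L, forall f : kG, {in K, forall x, f x = 1}}.
Local Notation n := (size L).
Local Notation Q := (rcosets K [set: gT]).

Definition homs_mx : 'M[k]_(n, #|gT|) := \matrix_(i, j) L`_i (enum_val j).

Lemma homs_mx_rank : \rank homs_mx = n.
Proof.
pose N := \matrix_(j < #|gT|, i < n) ((#|gT|%:R : k)^-1 * (L`_i (enum_val j))^-1).
have nz : (#|gT|%:R : k) != 0.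
  by rewrite (proj1 (pcharf0P k) k_pchar0) -lt0n (cardD1 1%g).
have MN : homs_mx *m N = 1%:M.
  apply/matrixP=> i i'; rewrite !mxE.
  transitivity ((#|gT|%:R : k)^-1 * \sum_x L`_i x * (L`_i' x)^-1).
    rewrite big_distrr /= (reindex _ (onW_bij _ (enum_val_bij gT))) /=.
    by apply: eq_bigr => j _; rewrite !mxE; ring.
  have hom_nth (m : 'I_n) : grouplike_dual L`_m by apply/L_hom/mem_nth.
  rewrite (hom_orthogonality (hom_nth i) (hom_nth i')) nth_uniq //.
  case: (eqVneq i i') => [<-|ne]; first by rewrite eqxx /= mulVf.
  by rewrite val_eqE (negbTE ne) mulr0.
apply/eqP; rewrite eqn_leq rank_leq_row -{1}(mxrank1 k n) -MN.
exact: mxrankM_maxl.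
Qed.

Lemma homs_mx_factor_cosets :
  homs_mx = \matrix_(i < n, j < #|Q|) L`_i (repr (enum_val j))
            *m \matrix_(j < #|Q|, j' < #|gT|) ((enum_val j' \in enum_val j : nat)%:R : k).
Proof.
apply/matrixP=> i j; rewrite !mxE; under eq_bigr do rewrite !mxE.
have fL : L`_i \in L by exact: mem_nth.
set x := enum_val j.
rewrite -(big_enum_val (A := mem Q) (fun q => L`_i (repr q) * ((x \in q) : nat)%:R)).
have xQ : (K :* x)%g \in Q by apply/rcosetsP; exists x; rewrite ?inE.
rewrite (bigD1 ((K :* x)%g)) //= big1 ?addr0.
  rewrite rcoset_refl mulr1; have /rcosetP[a aK ->] := mem_repr_rcoset K x.
  by have [_ ->] := L_hom fL; rewrite (L_trivK fL aK) mul1r.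
move=> q /andP[/rcosetsP[y _ ->] ne].
case: (boolP (x \in (K :* y)%g)) => [/rcoset_eqP E|_]; last by rewrite mulr0.
by rewrite E eqxx in ne.
Qed.

Lemma size_homs_le_index : (n <= #|[set: gT] : K|%g)%N.
Proof.
rewrite -homs_mx_rank homs_mx_factor_cosets.
exact: leq_trans (mxrankM_maxl _ _) (rank_leq_col _).
Qed.

End HomsUpperBound.

Lemma closed_field_prim_root (k : closedFieldType) n :
  [pchar k] =i pred0 -> (0 < n)%N -> {z : k | n.-primitive_root z}.
Proof.
move=> k_pchar0 n_gt0; pose p : {poly k} := 'X^n - 1.
have [r Dp] := closed_field_poly_normal p; apply/sigW.
rewrite (monicP _) ?monicXnsubC // scale1r in Dp.
have rn1 : all n.-unity_root r by apply/allP=> z; rewrite -root_prod_XsubC -Dp.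
have sz_r : (n < (size r).+1)%N by rewrite -(size_prod_XsubC r id) -Dp size_XnsubC.
have [|z] := hasP (has_prim_root n_gt0 rn1 _ sz_r); last by exists z.
rewrite -separable_prod_XsubC -Dp separable_Xn_sub_1 //.
by rewrite (proj1 (pcharf0P k) k_pchar0) -lt0n.
Qed.

(* Sends [zc ^+ i] to [z ^+ i]; when [zc] is a primitive [n]-th root of unity the
   default [0] is only reached off the [n]-th roots of unity. *)
Definition root_transfer (k : fieldType) n (zc : algC) (z : k) (c : algC) : k :=
  if [pick i : 'I_n | zc ^+ i == c] is Some i then z ^+ i else 0.

Lemma root_transfer_exp (k : fieldType) n zc (z : k) i :
  n.-primitive_root zc -> n.-primitive_root z -> root_transfer n zc z (zc ^+ i) = z ^+ i.
Proof.
move=> pc pz; rewrite /root_transfer; case: pickP => [j /eqP E | P].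
  by apply/eqP; rewrite (eq_prim_root_expr pz) -(eq_prim_root_expr pc) E.
have n_gt0 : (0 < n)%N by exact: prim_order_gt0 pc.
by have := P (Ordinal (ltn_pmod i n_gt0)); rewrite /= (prim_expr_mod pc) eqxx.
Qed.

Section HomsLowerBound.
Variables (k : fieldType) (gT : finGroupType) (K : {group gT}).
Hypothesis K_normal : (K <| [set: gT])%g.
Hypothesis quo_abelian : abelian ([set: gT] / K)%g.
Local Notation kG := {ffun gT -> k}.
Local Notation Q := ([set: gT] / K)%G.
Local Notation n := #|gT|.
Variables (zc : algC) (z : k).
Hypotheses (zc_prim : n.-primitive_root zc) (z_prim : n.-primitive_root z).

Let in_norm x : x \in 'N(K)%g.
Proof. by apply: (subsetP (normal_norm K_normal)); rewrite inE. Qed.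

Let in_quo (q : coset_of K) : q \in Q.
Proof. by have [x _ ->] := cosetP q; rewrite mem_quotient ?inE. Qed.

Lemma irr_quo_root_of_unity (i : Iirr Q) q : exists e : nat, 'chi_i q = zc ^+ e.
Proof.
have lin : 'chi_i \is a linear_char by exact/char_abelianP.
have : 'chi_i q ^+ n = 1.
  have /dvdnP[m ->] : (#[q]%g %| n)%N.
    apply: dvdn_trans (order_dvdG (in_quo q)) _.
    by rewrite card_quotient ?normal_norm // -cardsT dvdn_indexg.
  by rewrite mulnC exprM lin_char_unity_root ?in_quo ?expr1n.
by case/(prim_rootP zc_prim) => e ->; exists e.
Qed.

Definition hom_of_irr (i : Iirr Q) : kG :=
  [ffun x => root_transfer n zc z ('chi_i (coset K x))].

Lemma hom_of_irr_grouplike i : grouplike_dual (hom_of_irr i).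
Proof.
have lin : 'chi_i \is a linear_char by exact/char_abelianP.
split=> [|x y]; rewrite !ffunE.
  by rewrite morph1 lin_char1 // -(expr0 zc) root_transfer_exp // expr0.
rewrite morphM ?in_norm // lin_charM ?in_quo //.
have [a ->] := irr_quo_root_of_unity i (coset K x).
have [b ->] := irr_quo_root_of_unity i (coset K y).
by rewrite -exprD !root_transfer_exp // exprD.
Qed.

Lemma hom_of_irr_trivial i : {in K, forall x, hom_of_irr i x = 1}.
Proof.
have lin : 'chi_i \is a linear_char by exact/char_abelianP.
move=> x xK; rewrite ffunE coset_id // lin_char1 //.
by rewrite -(expr0 zc) root_transfer_exp // expr0.
Qed.

Lemma hom_of_irr_inj : injective hom_of_irr.
Proof.
move=> i j /ffunP Eij; apply: irr_inj; apply/cfunP => q.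
have [x _ ->] := cosetP q; have := Eij x; rewrite !ffunE.
have [a ->] := irr_quo_root_of_unity i (coset K x).
have [b ->] := irr_quo_root_of_unity j (coset K x).
rewrite !root_transfer_exp // => /eqP.
by rewrite (eq_prim_root_expr z_prim) -(eq_prim_root_expr zc_prim) => /eqP.
Qed.

Lemma index_le_size_homs (L : seq kG) :
  (forall f, grouplike_dual f -> {in K, forall x, f x = 1} -> f \in L) ->
  (#|[set: gT] : K|%g <= size L)%N.
Proof.
move=> homsL; rewrite -card_quotient ?normal_norm // -(card_Iirr_abelian quo_abelian).
rewrite cardE -(size_map hom_of_irr) uniq_leq_size //.
  by rewrite map_inj_uniq ?enum_uniq //; exact: hom_of_irr_inj.
move=> f /mapP[i _ ->]; apply: homsL; [exact: hom_of_irr_grouplike | exact: hom_of_irr_trivial].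
Qed.

End HomsLowerBound.

Lemma grouplike_trivial_on_joing_der1 (k : fieldType) (gT : finGroupType)
    (H : {group gT}) (f : {ffun gT -> k}) :
  grouplike_dual f -> {in H, forall x, f x = 1} ->
  {in (H <*> [set: gT]^`(1))%g, forall x, f x = 1}.
Proof.
case=> f1 fM fH.
have ker_group : group_set [set x | f x == 1].
  apply/group_setP; split=> [|x y]; first by rewrite inE f1.
  by rewrite !inE => /eqP fx /eqP fy; rewrite fM fx fy mulr1.
suff /subsetP sub_ker : (H <*> [set: gT]^`(1) \subset Group ker_group)%g.
  by move=> x /sub_ker; rewrite inE => /eqP.
rewrite join_subG; apply/andP; split; first by apply/subsetP=> x /fH; rewrite inE => ->.
rewrite derg1 gen_subG; apply/subsetP => _ /imset2P[x y _ _ ->].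
have fVf t : f t^-1%g * f t = 1 by rewrite -fM mulVg f1.
rewrite inE commgEl /conjg !fM; apply/eqP.
by transitivity ((f x^-1%g * f x) * (f y^-1%g * f y)); [ring | rewrite !fVf mulr1].
Qed.

Lemma size_homs_trivial_on (k : closedFieldType) (gT : finGroupType) (K : {group gT})
    (L : seq {ffun gT -> k}) :
  [pchar k] =i pred0 -> (K <| [set: gT])%g -> abelian ([set: gT] / K)%g -> uniq L ->
  (forall f, f \in L <-> grouplike_dual f /\ {in K, forall x, f x = 1}) ->
  size L = #|[set: gT] : K|%g.
Proof.
move=> k_pchar0 K_normal quo_abelian L_uniq memL.
have n_gt0 : (0 < #|gT|)%N by rewrite -cardsT cardG_gt0.
have [zc zc_prim] := C_prim_root_exists n_gt0.
have [z z_prim] := closed_field_prim_root k_pchar0 n_gt0.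
apply/eqP; rewrite eqn_leq size_homs_le_index // => [|f /memL[] //|f /memL[] //].
by rewrite /=; apply: (index_le_size_homs K_normal quo_abelian zc_prim z_prim) => f fG fK; apply/memL.
Qed.

Theorem corollary3p2
  (k : closedFieldType) (Hchar : [pchar k]%R =i pred0)
  (gT : finGroupType) (HZ : ('Z([set: gT]) = 1)%g)
  (H : {group gT}) (Hab : abelian H)
  (X : seq {ffun gT -> k}) (HXu : uniq X) (HX : forall f, (f \in X) = is_char H f)
  (w : {ffun gT -> k} -> {ffun gT -> k} -> k)
  (Hw : cocycle2 X w) (Hnd : nondeg_cocycle H X w)
  (Jinv : {ffun gT * gT -> k})
  (HJ1 : tmul (twistJ H X w) Jinv = tone k gT)
  (HJ2 : tmul Jinv (twistJ H X w) = tone k gT)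
  (L : seq {ffun gT -> k}) (HLu : uniq L)
  (HL : forall f, f \in L <-> grouplike_dual f /\ central_dual (twistJ H X w) Jinv f) :
  (#|H| %| #|gT| %/ size L)%N.
Proof.
pose K := (H <*> [set: gT]^`(1))%G.
have K_normal : (K <| [set: gT])%g by apply: sub_der1_normal; rewrite ?joing_subr ?subsetT.
have quo_abelian : abelian ([set: gT] / K)%g by apply: sub_der1_abelian; rewrite joing_subr.
have memL f : f \in L <-> grouplike_dual f /\ {in K, forall x, f x = 1}.
  rewrite HL; split=> -[fG fK]; split=> //.
    apply: (grouplike_trivial_on_joing_der1 fG).
    exact: (trivial_on_H_of_central Hchar HXu HX Hw HJ2 HZ Hnd fG fK).
  apply: (central_dual_trivial_on_H Hchar HXu HX Hw HJ2 fG) => x xH.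
  by apply: fK; rewrite mem_gen // inE xH.
rewrite (size_homs_trivial_on Hchar K_normal quo_abelian HLu memL).
by rewrite -cardsT divg_indexS ?subsetT // cardSg // joing_subl.
Qed.
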